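(* Let $a_{12},a_{34},d>0$ with $d>\max\{a_{12},a_{34}\}$, and consider the isosceles trapezium with vertices $A_1'=(-a_{12}/2,\,d)$, $A_2'=(a_{12}/2,\,d)$, $A_4=(-a_{34}/2,\,0)$, $A_3=(a_{34}/2,\,0)$; let $M_{12}=(0,d)$, $M_{34}=(0,0)$. Let $F$ be the intersection of the diagonals $A_1'A_3$, $A_2'A_4$ and $\theta=\angle A_1'FA_2'$. Let $F_{12}$ be the orthocenter of triangle $A_1'FA_2'$, $F_{34}$ the orthocenter of triangle $A_4FA_3$, $w(\theta)=2\sin\frac{\theta}{2}$, and $$l_{minT}=2|A_1'F_{12}|+2|A_3F_{34}|+w(\theta)|F_{12}F_{34}|.$$ Let $O_{12},O_{34}$ be the points on segment $M_{12}M_{34}$ with $\angle A_1'O_{12}A_2'=120^\circ$ and $\angle A_4O_{34}A_3=120^\circ$, and $$l_{minST}=2|A_1'O_{12}|+2|A_3O_{34}|+|O_{12}O_{34}|.$$ If $0<\theta<60^\circ$, then $l_{minT}<l_{minST}$; and if $60^\circ<\theta<90^\circ$, then $l_{minT}>l_{minST}$.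
   Context: $|XY|$ denotes Euclidean distance. $l_{minST}$ is the length of the full (unweighted) Steiner tree of the trapezium with Steiner points $O_{12},O_{34}$; $l_{minT}$ is the weighted length of the paper's ''construction tree'' with interior points $F_{12},F_{34}$ carrying weight $w(\theta)$ on the segment $F_{12}F_{34}$. *)

From Stdlib Require Import Reals Lra.
Open Scope R_scope.

Definition pt := (R * R)%type.

Definition vsub (P Q : pt) : pt := (fst P - fst Q, snd P - snd Q).
Definition dot (u v : pt) : R := fst u * fst v + snd u * snd v.

Definition edist (X Y : pt) : R := sqrt (dot (vsub X Y) (vsub X Y)).

Definition angle (P Q R0 : pt) : R :=
  acos (dot (vsub P Q) (vsub R0 Q) / (edist P Q * edist R0 Q)).

Definition on_seg (P Q X : pt) : Prop :=
  exists t, 0 <= t <= 1 /\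
    X = ((1 - t) * fst P + t * fst Q, (1 - t) * snd P + t * snd Q).

(* H is the orthocenter of triangle ABC: the altitudes from A and B pass
   through H (hence so does the one from C). *)
Definition is_orthocenter (A B C H : pt) : Prop :=
  dot (vsub H A) (vsub B C) = 0 /\ dot (vsub H B) (vsub A C) = 0.

From Stdlib Require Import Reals Lra Psatz.
Open Scope R_scope.

(* Everything happens on the symmetry axis.  With k := (a12 + a34) / (2 d),
   which is tan (theta / 2), the half-bases are k times the distances from F
   to the bases; the orthocenters F12, F34 lie at distances k a12 / 2 and
   k a34 / 2 from the bases, and O12, O34 at distances a12 / (2 sqrt 3) and
   a34 / (2 sqrt 3).  Hence, with w = 2 k / sqrt (1 + k^2),
     lminT = 4 k d / sqrt (1 + k^2)   and   lminST = d (1 + sqrt 3 k),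
   and comparing squares,
     (1 + k^2) (1 + sqrt 3 k)^2 - 16 k^2
       = (sqrt 3 k - 1) (sqrt 3 k^3 + 3 k^2 - 3 sqrt 3 k - 1),
   whose second factor is negative for 0 <= k <= 1.  So lminT < lminST exactly
   when sqrt 3 k < 1, i.e. when theta < 60 degrees. *)

Lemma edist_to_axis (x y y' : R) : edist (x, y) (0, y') = sqrt (x * x + (y - y') * (y - y')).
Proof. unfold edist, dot, vsub; simpl. f_equal. ring. Qed.

Lemma edist_axis (y y' : R) : y' <= y -> edist (0, y) (0, y') = y - y'.
Proof.
  intros Hy. rewrite edist_to_axis, Rmult_0_l, Rplus_0_l.
  apply sqrt_square. lra.
Qed.

Lemma on_seg_axis (d : R) (O : pt) : 0 <= d ->
  on_seg (0, d) (0, 0) O -> exists y, O = (0, y) /\ 0 <= y <= d.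
Proof.
  intros Hd [t [Ht ->]]. exists ((1 - t) * d).
  simpl. split; [f_equal; ring | nra].
Qed.

Lemma diagonals_meet_on_axis (c1 c2 d : R) (F : pt) : 0 < c1 + c2 -> d <> 0 ->
  on_seg (- c1, d) (c2, 0) F -> on_seg (c1, d) (- c2, 0) F -> F = (0, c2 * d / (c1 + c2)).
Proof.
  intros Hc Hd [t [_ ->]] [u [_ HF]]. injection HF as Hx Hy.
  assert (Htu : t = u) by (apply (Rmult_eq_reg_r d); lra).
  subst u.
  assert (Ht : t * (c1 + c2) = c1) by lra.
  simpl. f_equal; [lra |].
  apply (Rmult_eq_reg_r (c1 + c2)); [| lra].
  replace (c2 * d / (c1 + c2) * (c1 + c2)) with (c2 * d) by (field; lra).
  nra.
Qed.

Lemma orthocenter_isosceles (c y0 y : R) (H : pt) : c <> 0 -> y <> y0 ->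
  is_orthocenter (- c, y0) (0, y) (c, y0) H -> H = (0, y0 + c * c / (y - y0)).
Proof.
  destruct H as [x z]. unfold is_orthocenter, dot, vsub; simpl.
  intros Hc Hy [Ha Hb].
  assert (Hx : x = 0).
  { apply (Rmult_eq_reg_r (- 2 * c)); [lra |]. intro. apply Hc. lra. }
  subst x. f_equal.
  apply (Rplus_eq_reg_r (- y0)).
  apply (Rmult_eq_reg_r (y - y0)); [| lra].
  field_simplify; lra.
Qed.

Lemma angle_bound (P Q R0 : pt) : 0 <= angle P Q R0 <= PI.
Proof. apply acos_bound. Qed.

Lemma cos_angle_isosceles (c y0 y : R) : c <> 0 ->
  cos (angle (- c, y0) (0, y) (c, y0)) =
  ((y0 - y) * (y0 - y) - c * c) / ((y0 - y) * (y0 - y) + c * c).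
Proof.
  intros Hc. set (h := y0 - y).
  assert (HD : 0 < h * h + c * c) by nra.
  assert (Hnorm : edist (- c, y0) (0, y) * edist (c, y0) (0, y) = h * h + c * c).
  { rewrite !edist_to_axis. fold h.
    replace (- c * - c) with (c * c) by ring.
    rewrite Rplus_comm. apply sqrt_sqrt. lra. }
  unfold angle. rewrite Hnorm. unfold dot, vsub; simpl. fold h.
  replace ((- c - 0) * (c - 0) + h * h) with (h * h - c * c) by ring.
  apply cos_acos.
  split; apply (Rmult_le_reg_r (h * h + c * c)); try lra;
    unfold Rdiv; rewrite Rmult_assoc, Rinv_l by lra; nra.
Qed.

Lemma isosceles_apex_2PI3 (c y0 y : R) : c <> 0 ->
  angle (- c, y0) (0, y) (c, y0) = 2 * PI / 3 -> 3 * ((y0 - y) * (y0 - y)) = c * c.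
Proof.
  intros Hc Hangle.
  pose proof (cos_angle_isosceles c y0 y Hc) as Hcos.
  replace (2 * PI / 3) with (2 * (PI / 3)) in Hangle by field.
  rewrite Hangle, cos_2PI3 in Hcos.
  set (h := y0 - y) in *.
  assert (HD : 0 < h * h + c * c) by nra.
  assert (Hcos' : h * h - c * c = - 1 / 2 * (h * h + c * c)).
  { rewrite Hcos. field. lra. }
  lra.
Qed.

Lemma sqrt3_sq : sqrt 3 * sqrt 3 = 3.
Proof. apply sqrt_sqrt. lra. Qed.

Lemma sqrt3_height (h c : R) : 0 <= h -> 0 <= c -> 3 * (h * h) = c * c -> h = c / sqrt 3.
Proof.
  intros Hh Hc Heq. pose proof sqrt3_sq as Hq. pose proof Rlt_sqrt3_0 as Hq0.
  apply (Rmult_eq_reg_r (sqrt 3)); [| lra].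
  replace (c / sqrt 3 * sqrt 3) with c by (field; lra).
  apply Rsqr_inj; [nra | lra |]. unfold Rsqr.
  rewrite <- Heq. transitivity (h * h * (sqrt 3 * sqrt 3)); [ring | rewrite Hq; ring].
Qed.

Lemma sin_half_of_cos (theta k : R) : 0 <= theta <= PI -> 0 <= k ->
  cos theta = (1 - k * k) / (1 + k * k) -> sin (theta / 2) = k / sqrt (1 + k * k).
Proof.
  intros Htheta Hk Hcos.
  assert (Hr : sqrt (1 + k * k) * sqrt (1 + k * k) = 1 + k * k) by (apply sqrt_sqrt; nra).
  assert (Hr0 : 0 < sqrt (1 + k * k)) by (apply sqrt_lt_R0; nra).
  assert (Hs : 0 <= sin (theta / 2)) by (apply sin_ge_0; lra).
  assert (Hs2 : sin (theta / 2) * sin (theta / 2) = k * k / (1 + k * k)).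
  { assert (Hcos2 : 1 - 2 * sin (theta / 2) * sin (theta / 2) = (1 - k * k) / (1 + k * k)).
    { rewrite <- cos_2a_sin, <- Hcos. f_equal. field. }
    replace (k * k / (1 + k * k)) with ((1 - (1 - k * k) / (1 + k * k)) / 2) by (field; nra).
    lra. }
  apply Rsqr_inj; [lra | unfold Rdiv; apply Rmult_le_pos; [lra | apply Rlt_le, Rinv_0_lt_compat; lra] |].
  unfold Rsqr. rewrite Hs2.
  set (r := sqrt (1 + k * k)) in *.
  replace (k / r * (k / r)) with (k * k / (r * r)) by (field; lra).
  rewrite Hr. reflexivity.
Qed.

Lemma three_sq_lt_1_of_lt_PI3 (theta k : R) : 0 <= theta < PI / 3 ->
  cos theta = (1 - k * k) / (1 + k * k) -> 3 * (k * k) < 1.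
Proof.
  intros Htheta Hcos.
  assert (Hlt : cos (PI / 3) < cos theta) by (apply cos_decreasing_1; pose proof PI_RGT_0; lra).
  assert (Hk : (1 - k * k) / (1 + k * k) * (1 + k * k) = 1 - k * k) by (field; nra).
  rewrite cos_PI3, Hcos in Hlt. nra.
Qed.

Lemma three_sq_gt_1_of_gt_PI3 (theta k : R) : PI / 3 < theta <= PI ->
  cos theta = (1 - k * k) / (1 + k * k) -> 1 < 3 * (k * k).
Proof.
  intros Htheta Hcos.
  assert (Hlt : cos theta < cos (PI / 3)) by (apply cos_decreasing_1; pose proof PI_RGT_0; lra).
  assert (Hk : (1 - k * k) / (1 + k * k) * (1 + k * k) = 1 - k * k) by (field; nra).
  rewrite cos_PI3, Hcos in Hlt. nra.
Qed.

Lemma steiner_construction_gap (k : R) :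
  ((1 + sqrt 3 * k) * sqrt (1 + k * k)) * ((1 + sqrt 3 * k) * sqrt (1 + k * k))
  - (4 * k) * (4 * k) =
  (sqrt 3 * k - 1) * (sqrt 3 * k * k * k + 3 * k * k - 3 * sqrt 3 * k - 1).
Proof.
  assert (Hr : sqrt (1 + k * k) * sqrt (1 + k * k) = 1 + k * k) by (apply sqrt_sqrt; nra).
  pose proof sqrt3_sq as Hq.
  set (r := sqrt (1 + k * k)) in *. set (q := sqrt 3) in *.
  transitivity ((1 + q * k) * (1 + q * k) * (r * r) - 16 * k * k); [ring |].
  rewrite Hr.
  transitivity ((q * k - 1) * (q * k * k * k + 3 * k * k - 3 * q * k - 1) + 4 * k * k * (q * q - 3));
    [ring | rewrite Hq; ring].
Qed.

Lemma gap_cofactor_neg (k : R) : 0 <= k <= 1 ->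
  sqrt 3 * k * k * k + 3 * k * k - 3 * sqrt 3 * k - 1 < 0.
Proof.
  intros Hk. pose proof sqrt3_sq as Hq. pose proof Rlt_sqrt3_0 as Hq0.
  set (q := sqrt 3) in *.
  assert (Hq1 : 3 / 2 < q) by nra.
  assert (Hk3 : k * k * k <= k) by nra.
  assert (Hk2 : k * k <= k) by nra.
  nra.
Qed.

Lemma construction_lt_steiner (k : R) : 0 < k -> 3 * (k * k) < 1 ->
  4 * k / sqrt (1 + k * k) < 1 + sqrt 3 * k.
Proof.
  intros Hk Hk3.
  assert (Hr0 : 0 < sqrt (1 + k * k)) by (apply sqrt_lt_R0; nra).
  pose proof sqrt3_sq as Hq. pose proof Rlt_sqrt3_0 as Hq0.
  pose proof (steiner_construction_gap k) as Hgap.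
  pose proof (gap_cofactor_neg k ltac:(nra)) as Hcof.
  set (r := sqrt (1 + k * k)) in *. set (q := sqrt 3) in *.
  assert (Hqk : q * k < 1) by nra.
  apply (Rmult_lt_reg_r r); [lra |].
  replace (4 * k / r * r) with (4 * k) by (field; lra).
  apply Rsqr_incrst_0; [unfold Rsqr; nra | lra |].
  apply Rlt_le, Rmult_lt_0_compat; nra.
Qed.

Lemma steiner_lt_construction (k : R) : 0 < k < 1 -> 1 < 3 * (k * k) ->
  1 + sqrt 3 * k < 4 * k / sqrt (1 + k * k).
Proof.
  intros Hk Hk3.
  assert (Hr0 : 0 < sqrt (1 + k * k)) by (apply sqrt_lt_R0; nra).
  pose proof sqrt3_sq as Hq. pose proof Rlt_sqrt3_0 as Hq0.
  pose proof (steiner_construction_gap k) as Hgap.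
  pose proof (gap_cofactor_neg k ltac:(lra)) as Hcof.
  set (r := sqrt (1 + k * k)) in *. set (q := sqrt 3) in *.
  assert (Hqk : 1 < q * k) by (apply Rsqr_incrst_0; unfold Rsqr; nra).
  apply (Rmult_lt_reg_r r); [lra |].
  replace (4 * k / r * r) with (4 * k) by (field; lra).
  apply Rsqr_incrst_0; [unfold Rsqr; nra | | lra].
  apply Rlt_le, Rmult_lt_0_compat; nra.
Qed.

Section Trapezium.

(* [c1], [c2] are the half-bases a12 / 2, a34 / 2; [Hk] makes [k] the
   tangent of half the angle at F. *)
Variables c1 c2 d k : R.
Hypotheses (Hc1 : 0 < c1) (Hc2 : 0 < c2) (Hd : 0 < d) (Hk : c1 + c2 = k * d).

Let k_pos : 0 < k.
Proof. nra. Qed.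

Let apex_height : d - c2 / k = c1 / k.
Proof. replace c1 with (k * d - c2) by lra. field. lra. Qed.

Lemma trapezium_diagonals_meet (F : pt) :
  on_seg (- c1, d) (c2, 0) F -> on_seg (c1, d) (- c2, 0) F -> F = (0, c2 / k).
Proof.
  intros H13 H24. rewrite (diagonals_meet_on_axis c1 c2 d F ltac:(lra) ltac:(lra) H13 H24).
  f_equal. rewrite Hk. field. lra.
Qed.

Lemma cos_apex_angle :
  cos (angle (- c1, d) (0, c2 / k) (c1, d)) = (1 - k * k) / (1 + k * k).
Proof.
  rewrite cos_angle_isosceles by lra.
  rewrite apex_height.
  field. split; nra.
Qed.

Lemma top_orthocenter (H : pt) :
  is_orthocenter (- c1, d) (0, c2 / k) (c1, d) H -> H = (0, d - k * c1).
Proof.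
  assert (Hapex : c2 / k - d = - (c1 / k)) by lra.
  assert (Hc1k : 0 < c1 / k) by (apply Rdiv_lt_0_compat; lra).
  intros HH. rewrite (orthocenter_isosceles c1 d (c2 / k) H ltac:(lra) ltac:(lra) HH).
  f_equal. rewrite Hapex. field. lra.
Qed.

Lemma bottom_orthocenter (H : pt) :
  is_orthocenter (- c2, 0) (0, c2 / k) (c2, 0) H -> H = (0, k * c2).
Proof.
  assert (Hc2k : 0 < c2 / k) by (apply Rdiv_lt_0_compat; lra).
  intros HH. rewrite (orthocenter_isosceles c2 0 (c2 / k) H ltac:(lra) ltac:(lra) HH).
  f_equal. field. lra.
Qed.

Lemma top_steiner_point (O : pt) : on_seg (0, d) (0, 0) O ->
  angle (- c1, d) O (c1, d) = 2 * PI / 3 -> O = (0, d - c1 / sqrt 3).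
Proof.
  intros HO Hangle.
  destruct (on_seg_axis d O ltac:(lra) HO) as [y [-> Hy]].
  apply isosceles_apex_2PI3 in Hangle; [| lra].
  assert (Hh : d - y = c1 / sqrt 3) by (apply sqrt3_height; lra).
  f_equal. lra.
Qed.

Lemma bottom_steiner_point (O : pt) : on_seg (0, d) (0, 0) O ->
  angle (- c2, 0) O (c2, 0) = 2 * PI / 3 -> O = (0, c2 / sqrt 3).
Proof.
  intros HO Hangle.
  destruct (on_seg_axis d O ltac:(lra) HO) as [y [-> Hy]].
  apply isosceles_apex_2PI3 in Hangle; [| lra].
  f_equal. apply sqrt3_height; [lra | lra |].
  rewrite <- Hangle. ring.
Qed.

Hypothesis Hk1 : k < 1.

Lemma construction_tree_length :
  2 * edist (- c1, d) (0, d - k * c1) + 2 * edist (c2, 0) (0, k * c2)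
  + 2 * (k / sqrt (1 + k * k)) * edist (0, d - k * c1) (0, k * c2)
  = d * (4 * k / sqrt (1 + k * k)).
Proof.
  assert (Hr : sqrt (1 + k * k) * sqrt (1 + k * k) = 1 + k * k) by (apply sqrt_sqrt; nra).
  assert (Hr0 : 0 < sqrt (1 + k * k)) by (apply sqrt_lt_R0; nra).
  set (r := sqrt (1 + k * k)) in *.
  assert (Hleg1 : edist (- c1, d) (0, d - k * c1) = c1 * r).
  { rewrite edist_to_axis. apply sqrt_lem_1; [nra | nra |].
    transitivity (c1 * c1 * (r * r)); [ring | rewrite Hr; ring]. }
  assert (Hleg2 : edist (c2, 0) (0, k * c2) = c2 * r).
  { rewrite edist_to_axis. apply sqrt_lem_1; [nra | nra |].
    transitivity (c2 * c2 * (r * r)); [ring | rewrite Hr; ring]. }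
  assert (Hmid : edist (0, d - k * c1) (0, k * c2) = d * (1 - k * k)).
  { rewrite edist_axis by nra. nra. }
  rewrite Hleg1, Hleg2, Hmid.
  apply (Rmult_eq_reg_r r); [| lra].
  field_simplify; [| lra | lra].
  replace (r ^ 2) with (1 + k * k) by (rewrite <- Hr; ring).
  replace c1 with (k * d - c2) by lra. ring.
Qed.

Lemma steiner_tree_length :
  2 * edist (- c1, d) (0, d - c1 / sqrt 3) + 2 * edist (c2, 0) (0, c2 / sqrt 3)
  + edist (0, d - c1 / sqrt 3) (0, c2 / sqrt 3)
  = d * (1 + sqrt 3 * k).
Proof.
  pose proof sqrt3_sq as Hq. pose proof Rlt_sqrt3_0 as Hq0.
  set (q := sqrt 3) in *.
  assert (Hleg1 : edist (- c1, d) (0, d - c1 / q) = 2 * c1 / q).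
  { rewrite edist_to_axis. apply sqrt_lem_1; [nra | apply Rlt_le, Rdiv_lt_0_compat; lra |].
    replace (d - (d - c1 / q)) with (c1 / q) by ring.
    field_simplify; try lra.
    replace (q ^ 2) with 3 by (rewrite <- Hq; ring). field. }
  assert (Hleg2 : edist (c2, 0) (0, c2 / q) = 2 * c2 / q).
  { rewrite edist_to_axis. apply sqrt_lem_1; [nra | apply Rlt_le, Rdiv_lt_0_compat; lra |].
    field_simplify; try lra.
    replace (q ^ 2) with 3 by (rewrite <- Hq; ring). field. }
  assert (Hmid : edist (0, d - c1 / q) (0, c2 / q) = d - (c1 + c2) / q).
  { rewrite edist_axis; [field; lra |].
    apply (Rmult_le_reg_r q); [lra |]. field_simplify; nra. }
  rewrite Hleg1, Hleg2, Hmid.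
  replace (d * (1 + q * k)) with (d + (q * q) * (k * d) / q) by (field; lra).
  rewrite Hq, <- Hk. field. lra.
Qed.

End Trapezium.

Theorem theorem3 (a12 a34 d : R) :
  0 < a12 -> 0 < a34 -> 0 < d -> Rmax a12 a34 < d ->
  let A1' : pt := (- a12 / 2, d) in
  let A2' : pt := (a12 / 2, d) in
  let A4 : pt := (- a34 / 2, 0) in
  let A3 : pt := (a34 / 2, 0) in
  let M12 : pt := (0, d) in
  let M34 : pt := (0, 0) in
  forall F F12 F34 O12 O34 : pt,
    on_seg A1' A3 F -> on_seg A2' A4 F ->
    is_orthocenter A1' F A2' F12 ->
    is_orthocenter A4 F A3 F34 ->
    on_seg M12 M34 O12 -> angle A1' O12 A2' = 2 * PI / 3 ->
    on_seg M12 M34 O34 -> angle A4 O34 A3 = 2 * PI / 3 ->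
    let theta := angle A1' F A2' in
    let w := 2 * sin (theta / 2) in
    let lminT := 2 * edist A1' F12 + 2 * edist A3 F34 + w * edist F12 F34 in
    let lminST := 2 * edist A1' O12 + 2 * edist A3 O34 + edist O12 O34 in
    (0 < theta < PI / 3 -> lminT < lminST) /\
    (PI / 3 < theta < PI / 2 -> lminT > lminST).
Proof.
  intros Ha12 Ha34 Hd Hmax A1' A2' A4 A3 M12 M34 F F12 F34 O12 O34
    HF13 HF24 HF12 HF34 HO12 Hang12 HO34 Hang34.
  subst A1' A2' A4 A3 M12 M34. cbv zeta.
  rewrite !Rdiv_opp_l in *.
  set (k := (a12 + a34) / (2 * d)).
  assert (Hk : a12 / 2 + a34 / 2 = k * d) by (unfold k; field; lra).
  assert (Hk0 : 0 < k) by nra.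
  assert (Hk1 : k < 1) by (pose proof (Rmax_l a12 a34); pose proof (Rmax_r a12 a34); nra).
  clearbody k.
  assert (EF : F = (0, a34 / 2 / k))
    by (apply trapezium_diagonals_meet with (c1 := a12 / 2) (d := d); try assumption; lra).
  subst F.
  assert (EF12 : F12 = (0, d - k * (a12 / 2)))
    by (apply top_orthocenter with (c2 := a34 / 2); try assumption; lra).
  assert (EF34 : F34 = (0, k * (a34 / 2)))
    by (apply bottom_orthocenter with (c1 := a12 / 2) (d := d); try assumption; lra).
  assert (EO12 : O12 = (0, d - a12 / 2 / sqrt 3))
    by (apply top_steiner_point; try assumption; lra).
  assert (EO34 : O34 = (0, a34 / 2 / sqrt 3))
    by (apply bottom_steiner_point with (d := d); try assumption; lra).
  subst F12 F34 O12 O34.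
  set (theta := angle (- (a12 / 2), d) (0, a34 / 2 / k) (a12 / 2, d)).
  assert (Hcos : cos theta = (1 - k * k) / (1 + k * k))
    by (apply cos_apex_angle with (d := d); try assumption; lra).
  assert (Htheta : 0 <= theta <= PI) by apply angle_bound.
  rewrite (sin_half_of_cos theta k Htheta ltac:(lra) Hcos).
  rewrite construction_tree_length, (steiner_tree_length _ _ _ k) by (try assumption; lra).
  split; intros Hlt; apply Rmult_lt_compat_l; try lra.
  - apply construction_lt_steiner; [lra |]. apply (three_sq_lt_1_of_lt_PI3 theta k); [lra | exact Hcos].
  - apply steiner_lt_construction; [lra |]. apply (three_sq_gt_1_of_gt_PI3 theta k); [lra | exact Hcos].
Qed.
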